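(* Let $G=(V,E)$ be a directed multigraph with arc costs $c$ and gains $\gamma>0$, $u\in V$, and let $G_u$ and $f$ be as in the context. Let $\delta^{(1)}>\delta^{(2)}>\dots>\delta^{(\ell)}$ be real numbers, and for each $i\in[\ell]$ let $P^{(i)}$ be a $u$-$u'$ path in $G_u$ such that the unit flow on $P^{(i)}$ is an optimal solution of the primal LP for $f(\delta^{(i)})$. Then the sequence $(P^{(1)},\dots,P^{(\ell)})$ satisfies subpath monotonicity at $u$: for all $i<j$ and every node $v\ne u$ lying on both $P^{(i)}$ and $P^{(j)}$, $\gamma(P^{(i)}_{uv})\le\gamma(P^{(j)}_{uv})$.
   Context: $G_u$ is obtained from $G$ by splitting $u$ into $u$ (keeping its outgoing arcs) and a new node $u'$ to which all arcs entering $u$ are redirected (with the same costs and gains). For a walk $P$ with arcs $e_1,\dots,e_k$: $c(P):=\sum_i(\prod_{j<i}\gamma_{e_j})c_{e_i}$, $\gamma(P):=\prod_i\gamma_{e_i}$; $P_{uv}$ is the subpath of $P$ from $u$ to $v$. $\mathcal{D}:=\{x\in\mathbb{R}^E_{\ge0}: x(\delta^+(u))=1,\ \sum_{e\in\delta^+(v)}x_e-\sum_{e\in\delta^-(v)}\gamma_ex_e=0\ \forall v\ne u\}$; the primal LP for $f(\delta)$ is $\min\{c^\top x+\delta\sum_{e\in\delta^-(u)}\gamma_ex_e-\delta: x\in\mathcal{D}\}$, with value $f(\delta)$. The unit flow on a $u$-$u'$ path $P$ with arcs $e_1,\dots,e_k$ is the vector $x$ with $x_{e_i}:=\prod_{j<i}\gamma_{e_j}$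 on the corresponding arcs of $G$ and $0$ elsewhere. *)

From HB Require Import structures.
From mathcomp Require Import all_boot all_order all_algebra.
From mathcomp Require Import reals.
Set Implicit Arguments. Unset Strict Implicit. Unset Printing Implicit Defensive.
Import Order.TTheory GRing.Theory Num.Theory.
Local Open Scope ring_scope.

(* A directed multigraph G = (V, E): arcs e : E with tail [tl e] and head [hd e]. *)

(* The split graph G_u: node set [option V], where [Some v] is the node v of G
   (in particular [Some u] is u, keeping its outgoing arcs) and [None] is the new
   node u'. *)
Definition tailu (V E : finType) (tl : E -> V) (e : E) : option V := Some (tl e).
Definition headu (V E : finType) (hd : E -> V) (u : V) (e : E) : option V :=
  if hd e == u then None else Some (hd e).

Fixpoint is_walk_u (V E : finType) (tl hd : E -> V) (u : V)
    (x : option V) (p : seq E) : bool :=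
  match p with
  | [::] => true
  | e :: p' => (tailu tl e == x) && is_walk_u tl hd u (headu hd u e) p'
  end.

Definition nodes_u (V E : finType) (hd : E -> V) (u : V) (p : seq E)
  : seq (option V) := Some u :: map (headu hd u) p.

Definition is_uu'_path (V E : finType) (tl hd : E -> V) (u : V) (p : seq E) :=
  [&& is_walk_u tl hd u (Some u) p,
      last (Some u) (map (headu hd u) p) == None
    & uniq (nodes_u hd u p)].

(* gamma(P_{uv}): product of the gains of the arcs of P from u up to the
   (first, hence unique) arrival at node v. *)
Fixpoint gain_upto (R : realType) (V E : finType) (hd : E -> V) (u : V)
    (gam : E -> R) (v : option V) (p : seq E) : R :=
  match p with
  | [::] => 1
  | e :: p' => gam e * (if headu hd u e == v then 1
                        else gain_upto hd u gam v p')
  end.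

(* unit flow on a path e_1..e_k : x_{e_i} = prod_{j<i} gamma_{e_j}, 0 elsewhere *)
Fixpoint unit_flow_aux (R : realType) (E : finType) (gam : E -> R)
    (g : R) (p : seq E) : E -> R :=
  match p with
  | [::] => fun _ => 0
  | e :: p' => fun a => (if a == e then g else 0) + unit_flow_aux gam (g * gam e) p' a
  end.
Definition unit_flow (R : realType) (E : finType) (gam : E -> R) (p : seq E) : E -> R :=
  unit_flow_aux gam 1 p.

Definition outflow (R : realType) (V E : finType) (tl : E -> V) (x : E -> R) (v : V) : R :=
  \sum_(e : E | tl e == v) x e.
Definition gain_inflow (R : realType) (V E : finType) (hd : E -> V) (gam : E -> R)
    (x : E -> R) (v : V) : R :=
  \sum_(e : E | hd e == v) gam e * x e.

Definition in_D (R : realType) (V E : finType) (tl hd : E -> V) (gam : E -> R)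
    (u : V) (x : E -> R) : Prop :=
  [/\ forall e, 0 <= x e,
      outflow tl x u = 1
    & forall v, v != u -> outflow tl x v - gain_inflow hd gam x v = 0].

Definition primal_obj (R : realType) (V E : finType) (hd : E -> V) (c gam : E -> R)
    (u : V) (delta : R) (x : E -> R) : R :=
  \sum_(e : E) c e * x e + delta * gain_inflow hd gam x u - delta.

Definition primal_optimal (R : realType) (V E : finType) (tl hd : E -> V)
    (c gam : E -> R) (u : V) (delta : R) (x : E -> R) : Prop :=
  in_D tl hd gam u x /\
  forall y, in_D tl hd gam u y -> primal_obj hd c gam u delta x <= primal_obj hd c gam u delta y.

From HB Require Import structures.
From mathcomp Require Import all_boot all_order all_algebra.
From mathcomp Require Import reals.
From mathcomp Require Import ring lra.
Set Implicit Arguments. Unset Strict Implicit. Unset Printing Implicit Defensive.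
Import Order.TTheory GRing.Theory Num.Theory.
Local Open Scope ring_scope.

(* The unit flow on any u-u' walk W of G_u is feasible, with objective
   c(W) + δ γ(W) - δ; so a path that is optimal at δ minimises
   c(W) + δ γ(W) over all u-u' walks, simple or not.  Split P^(i) = A_i B_i
   and P^(j) = A_j B_j at v and compare with the exchanged walks A_j B_i and
   A_i B_j.  With X_i the δ^(i)-value of B_i and X_j the δ^(j)-value of B_j,
   the two exchanges give (γ(A_i) - γ(A_j)) (X_i - X_j) <= 0, while comparing
   P^(j) with A_j B_i and using δ^(j) < δ^(i), γ(B_i) > 0 gives X_j < X_i.
   Hence γ(A_i) <= γ(A_j). *)

Lemma exchange_le (R : realFieldType) (ai aj Ci Cj Xi Xj : R) :
  Xj < Xi ->
  Ci + ai * Xi <= Cj + aj * Xi -> Cj + aj * Xj <= Ci + ai * Xj ->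
  ai <= aj.
Proof. by move=> ltX le_i le_j; rewrite leNgt; apply/negP => lta; nra. Qed.

Section UnitFlows.
Variables (R : realType) (V E : finType) (tl hd : E -> V) (c gam : E -> R) (u : V).
Hypothesis gam_pos : forall e, 0 < gam e.

Local Notation h := (headu hd u).
Local Notation flow := (unit_flow_aux gam).

Definition gain (p : seq E) : R := foldr (fun e r => gam e * r) 1 p.
Definition cost (p : seq E) : R := foldr (fun e r => c e + gam e * r) 0 p.
Definition value (d : R) (p : seq E) : R := cost p + d * gain p.

Definition is_uu'_walk (p : seq E) :=
  is_walk_u tl hd u (Some u) p && (last (Some u) (map h p) == None).

Lemma gain_gt0 p : 0 < gain p.
Proof. by elim: p => //= e p IH; rewrite mulr_gt0. Qed.

Lemma gain_cat A B : gain (A ++ B) = gain A * gain B.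
Proof. by elim: A => [|e A IH] /=; rewrite ?mul1r // IH mulrA. Qed.

Lemma cost_cat A B : cost (A ++ B) = cost A + gain A * cost B.
Proof. by elim: A => [|e A IH] /=; rewrite ?add0r ?mul1r // IH; ring. Qed.

Lemma value_cat d A B : value d (A ++ B) = cost A + gain A * value d B.
Proof. by rewrite /value gain_cat cost_cat; ring. Qed.

Lemma value_lt d d' p : d < d' -> value d p < value d' p.
Proof. by move=> lt_d; rewrite ltrD2l ltr_pM2r ?gain_gt0. Qed.

Lemma is_walk_u_cat s A B : is_walk_u tl hd u s (A ++ B) =
  is_walk_u tl hd u s A && is_walk_u tl hd u (last s (map h A)) B.
Proof. by elim: A s => [|e A IH] s //=; rewrite IH andbA. Qed.

Lemma uu'_walk_splice A B A' B' :
  last (Some u) (map h A) = last (Some u) (map h A') ->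
  is_uu'_walk (A ++ B) -> is_uu'_walk (A' ++ B') -> is_uu'_walk (A ++ B').
Proof.
rewrite /is_uu'_walk !is_walk_u_cat !map_cat !last_cat => ->.
by case/andP=> /andP[-> _] _ /andP[/andP[_ ->] ->].
Qed.

Lemma split_at_node v p : Some v \in map h p -> exists A B,
  [/\ p = A ++ B, forall x, last x (map h A) = Some v
    & gain_upto hd u gam (Some v) p = gain A].
Proof.
elim: p => [|e p IH] //=; rewrite in_cons.
case: (eqVneq (h e) (Some v)) => [he _ | hne /= /IH [A [B [-> endA gA]]]].
  by exists [:: e], p; split => //=; rewrite he eqxx mulr1.
by exists (e :: A), B; split => //=; rewrite gA.
Qed.

Lemma headu_neq_u e : h e != Some u.
Proof. by rewrite /headu; case: ifP => // /negbT; apply: contra => /eqP[->]. Qed.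

Lemma odflt_headu e : odflt u (h e) = hd e.
Proof. by rewrite /headu; case: ifP => // /eqP ->. Qed.

Lemma mem_nodes_u v p : v != u -> (Some v \in nodes_u hd u p) = (Some v \in map h p).
Proof. by move=> vu; rewrite /nodes_u in_cons (inj_eq Some_inj) (negbTE vu). Qed.

Lemma sum_if_eq (P : pred E) (F : E -> R) e :
  \sum_(a | P a) (if a == e then F a else 0) = if P e then F e else 0.
Proof.
rewrite big_mkcond (bigD1 e) //= eqxx big1 ?addr0 //.
by move=> a /negbTE ->; case: (P a).
Qed.

Lemma unit_flow_aux_ge0 g p a : 0 <= g -> 0 <= flow g p a.
Proof.
elim: p g => [|e p IH] g g_ge0 //=.
rewrite addr_ge0 //; first by case: ifP.
by rewrite IH // mulr_ge0 // ltW.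
Qed.

Lemma cost_unit_flow_aux g p : \sum_a c a * flow g p a = g * cost p.
Proof.
elim: p g => [|e p IH] g /=; first by rewrite big1 ?mulr0 // => a _; rewrite mulr0.
under eq_bigr => a _ do rewrite mulrDr (fun_if ( *%R (c a))) mulr0.
by rewrite big_split /= sum_if_eq IH; ring.
Qed.

Lemma outflow_cons e p g w : outflow tl (flow g (e :: p)) w =
  (if tl e == w then g else 0) + outflow tl (flow (g * gam e) p) w.
Proof. by rewrite /outflow /= big_split /= sum_if_eq. Qed.

Lemma gain_inflow_cons e p g w : gain_inflow hd gam (flow g (e :: p)) w =
  (if hd e == w then gam e * g else 0) + gain_inflow hd gam (flow (g * gam e) p) w.
Proof.
rewrite /gain_inflow /=.
under eq_bigr => a _ do rewrite mulrDr (fun_if ( *%R (gam a))) mulr0.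
by rewrite big_split /= sum_if_eq.
Qed.

(* [odflt u] maps the nodes of G_u back to G, identifying u' with u. *)
Lemma net_outflow_unit_flow_aux g s p w : is_walk_u tl hd u s p ->
  outflow tl (flow g p) w - gain_inflow hd gam (flow g p) w =
  (if odflt u s == w then g else 0) -
  (if odflt u (last s (map h p)) == w then g * gain p else 0).
Proof.
elim: p g s => [|e p IH] g s /=.
  move=> _; rewrite /outflow /gain_inflow !big1 => [|a _|a _]; rewrite ?mulr0 //.
  by rewrite mulr1 !subrr.
case/andP=> /eqP <- {s} walk_p; rewrite outflow_cons gain_inflow_cons.
have := IH (g * gam e) _ walk_p; rewrite odflt_headu /=.
by case: (tl e == w); case: (hd e == w); case: (_ == w) => net_p; lra.
Qed.

Lemma outflow_u_eq0 g s p : s != Some u -> is_walk_u tl hd u s p ->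
  outflow tl (flow g p) u = 0.
Proof.
elim: p g s => [|e p IH] g s; first by move=> *; rewrite /outflow big1.
move=> s_neq_u /= /andP[/eqP tl_e walk_p].
rewrite outflow_cons (IH _ _ (headu_neq_u e) walk_p) addr0.
by case: eqP => // tl_e_u; move: s_neq_u; rewrite -tl_e /tailu tl_e_u eqxx.
Qed.

Lemma net_outflow_unit_flow p w : is_uu'_walk p ->
  outflow tl (unit_flow gam p) w - gain_inflow hd gam (unit_flow gam p) w =
  (u == w)%:R * (1 - gain p).
Proof.
case/andP=> walk_p /eqP end_p.
rewrite /unit_flow (net_outflow_unit_flow_aux _ _ walk_p) end_p /= mul1r.
by case: (u == w); rewrite ?mul1r ?mul0r ?subrr.
Qed.

Lemma outflow_unit_flow_u p : is_uu'_walk p -> outflow tl (unit_flow gam p) u = 1.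
Proof.
case: p => [|e p] /andP[//= /andP[/eqP tl_e walk_p] _].
rewrite /unit_flow outflow_cons (outflow_u_eq0 _ (headu_neq_u e) walk_p) addr0.
by case: tl_e => ->; rewrite eqxx.
Qed.

Lemma unit_flow_in_D p : is_uu'_walk p -> in_D tl hd gam u (unit_flow gam p).
Proof.
move=> uu'_p; split; first by move=> a; apply: unit_flow_aux_ge0.
  exact: outflow_unit_flow_u.
by move=> w w_neq_u; rewrite net_outflow_unit_flow // eq_sym (negbTE w_neq_u) mul0r.
Qed.

Lemma primal_obj_unit_flow d p : is_uu'_walk p ->
  primal_obj hd c gam u d (unit_flow gam p) = value d p - d.
Proof.
move=> uu'_p; have := net_outflow_unit_flow u uu'_p.
rewrite outflow_unit_flow_u // eqxx mul1r /primal_obj /unit_flow cost_unit_flow_aux.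
by rewrite /value mul1r => net_u; have -> : gain_inflow hd gam (flow 1 p) u = gain p by lra.
Qed.

Lemma primal_optimal_value_le d p q :
  primal_optimal tl hd c gam u d (unit_flow gam p) ->
  is_uu'_walk p -> is_uu'_walk q -> value d p <= value d q.
Proof.
case=> _ opt_p uu'_p uu'_q.
by have := opt_p _ (unit_flow_in_D uu'_q); rewrite !primal_obj_unit_flow // lerD2r.
Qed.

Lemma optimal_prefix_gain_le (di dj : R) Pi Pj v : dj < di ->
  is_uu'_walk Pi -> is_uu'_walk Pj ->
  primal_optimal tl hd c gam u di (unit_flow gam Pi) ->
  primal_optimal tl hd c gam u dj (unit_flow gam Pj) ->
  Some v \in map h Pi -> Some v \in map h Pj ->
  gain_upto hd u gam (Some v) Pi <= gain_upto hd u gam (Some v) Pj.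
Proof.
move=> lt_dji uu'_Pi uu'_Pj opt_Pi opt_Pj.
move=> /split_at_node[Ai [Bi [def_Pi end_Ai ->]]] /split_at_node[Aj [Bj [def_Pj end_Aj ->]]].
rewrite {}def_Pi in uu'_Pi opt_Pi; rewrite {}def_Pj in uu'_Pj opt_Pj.
have uu'_AjBi : is_uu'_walk (Aj ++ Bi) by apply: uu'_walk_splice uu'_Pj uu'_Pi; rewrite end_Ai.
have uu'_AiBj : is_uu'_walk (Ai ++ Bj) by apply: uu'_walk_splice uu'_Pi uu'_Pj; rewrite end_Aj.
have := primal_optimal_value_le opt_Pi uu'_Pi uu'_AjBi.
have := primal_optimal_value_le opt_Pj uu'_Pj uu'_AiBj.
have := primal_optimal_value_le opt_Pj uu'_Pj uu'_AjBi.
rewrite !value_cat lerD2l ler_pM2l ?gain_gt0 // => le_Bj_Bi le_j le_i.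
exact: exchange_le (le_lt_trans le_Bj_Bi (value_lt Bi lt_dji)) le_i le_j.
Qed.

End UnitFlows.

Theorem lemma4p10 (R : realType) (V E : finType) (tl hd : E -> V)
    (c gam : E -> R) (gam_pos : forall e, 0 < gam e) (u : V)
    (l : nat) (delta : 'I_l -> R) (P : 'I_l -> seq E) :
  (forall i j : 'I_l, (i < j)%N -> delta j < delta i) ->
  (forall i, is_uu'_path tl hd u (P i)) ->
  (forall i, primal_optimal tl hd c gam u (delta i) (unit_flow gam (P i))) ->
  forall (i j : 'I_l), (i < j)%N ->
  forall v : V, v != u ->
    Some v \in nodes_u hd u (P i) -> Some v \in nodes_u hd u (P j) ->
    gain_upto hd u gam (Some v) (P i) <= gain_upto hd u gam (Some v) (P j).
Proof.
move=> delta_decr paths opt i j lt_ij v v_neq_u.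
have uu'_walk k : is_uu'_walk tl hd u (P k).
  by case/and3P: (paths k) => walk_P end_P _; apply/andP.
rewrite !mem_nodes_u //.
exact: (optimal_prefix_gain_le gam_pos (delta_decr _ _ lt_ij) (uu'_walk i) (uu'_walk j)
  (opt i) (opt j)).
Qed.
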